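(* Let $k\ge 2$, let $H_0$ be a finite $k$-uniform hypergraph and let $(H_t)_{t\ge0}$ be the ILTH hypergraphs generated from $H_0$. For each $t$ let $A(t)$ be the set of 5-tuples $(u,e_1,v,e_2,w)$ with $u,v,w\in V(H_t)$ distinct, $e_1,e_2\in E(H_t)$ (not necessarily distinct), such that there is some $e_3\in E(H_t)$ with $u\in e_1\cap e_3$, $v\in e_1\cap e_2$ and $w\in e_2\cap e_3$. Then for all nonnegative integers $t$, $|A(t)|=(k^2)^t|A(0)|$.
   Context: A $k$-uniform hypergraph has every hyperedge a $k$-element subset of the vertex set. The ILTH process: given $H_t$, form $H_{t+1}$ by adding for each vertex $x\in V(H_t)$ a new vertex $x'$ (its clone), and taking $E(H_{t+1})=E(H_t)\cup\{(e\setminus\{x\})\cup\{x'\} : e\in E(H_t),\ x\in e\}$. *)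

From HB Require Import structures.
From mathcomp Require Import all_boot.
Set Implicit Arguments. Unset Strict Implicit. Unset Printing Implicit Defensive.

(* A hypergraph on the finite vertex type T is given by its edge set
   E : {set {set T}}; the vertex set is all of T. *)
Definition uniform (T : finType) (k : nat) (E : {set {set T}}) : Prop :=
  forall e, e \in E -> #|e| = k.

(* Vertex type of H_t: H_{t+1} has vertices inl x (old x) and inr x (clone x'). *)
Fixpoint ilth_V (T : finType) (t : nat) : finType :=
  match t with
  | 0 => T
  | t'.+1 => Finite.clone _ (ilth_V T t' + ilth_V T t')%type
  end.

Definition ilth_step (T : finType) (E : {set {set T}}) : {set {set (T + T)%type}} :=
  [set (@inl T T) @: e | e : {set T} in E] :|:
  [set ((@inl T T) @: (e :\ x)) :|: [set inr x] | e : {set T} in E, x : T in e].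

Fixpoint ilth_E (T : finType) (E0 : {set {set T}}) (t : nat) : {set {set ilth_V T t}} :=
  match t as t0 return {set {set ilth_V T t0}} with
  | 0 => E0
  | t'.+1 => ilth_step (ilth_E E0 t')
  end.

Definition A_set (T : finType) (E : {set {set T}}) :
    {set T * {set T} * T * {set T} * T} :=
  [set p : T * {set T} * T * {set T} * T |
     let: (u, e1, v, e2, w) := p in
     [&& u != v, v != w, u != w, e1 \in E, e2 \in E &
      [exists e3 in E,
         [&& u \in e1, u \in e3, v \in e1, v \in e2, w \in e2 & w \in e3]]]].

From mathcomp Require Import all_boot.
Set Implicit Arguments. Unset Strict Implicit. Unset Printing Implicit Defensive.

(* Every edge of H_{t+1} is either the copy of an edge e of H_t or e with one
   vertex x replaced by its clone x', so forgetting clones maps A(t+1) to A(t).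
   Over a tuple (u, e1, v, e2, w) whose middle vertex stays old, a lift is fixed
   by choosing a lift of e1 and a lift of e2 not cloning v, k choices each; only
   the choice cloning u in e1 and w in e2 fails, since then e3 would have to
   contain two clones.  Exactly one further lift passes through the clone v',
   so every fibre has k^2 elements. *)

Lemma card_constant_fibers (aT rT : finType) (f : aT -> rT) (A : {set aT})
    (B : {set rT}) c :
  {in A, forall a, f a \in B} ->
  {in B, forall b, #|[set a in A | f a == b]| = c} -> #|A| = c * #|B|.
Proof.
move=> fAB fibers; rewrite -sum1_card (partition_big f (mem B)) //=.
rewrite mulnC -sum_nat_const; apply: eq_bigr => b Bb.
by rewrite -(fibers b Bb) -sum1_card; apply: eq_bigl => a; rewrite inE.
Qed.

Lemma A_setP (U : finType) (E : {set {set U}}) u e1 v e2 w :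
  reflect (exists2 e3, e3 \in E &
             [/\ [&& u != v, v != w & u != w], (e1 \in E) && (e2 \in E),
                 (u \in e1) && (v \in e1), (v \in e2) && (w \in e2)
               & (u \in e3) && (w \in e3)])
          ((u, e1, v, e2, w) \in A_set E).
Proof.
rewrite inE; apply: (iffP idP).
- case/andP=> uv /and5P[vw uw E1 E2 /exists_inP[e3 E3 /and5P[u1 u3 v1 v2 /andP[w2 w3]]]].
  by exists e3; rewrite ?uv ?vw ?uw ?E1 ?E2 ?u1 ?u3 ?v1 ?v2 ?w2 ?w3.
- case=> e3 E3 [/and3P[-> -> ->] /andP[-> ->] /andP[u1 v1] /andP[v2 w2] /andP[u3 w3]].
  by apply/exists_inP; exists e3; rewrite ?u1 ?u3 ?v1 ?v2 ?w2 ?w3.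
Qed.

Section ILTHStep.

Variable T : finType.
Implicit Types (E : {set {set T}}) (e : {set T}) (x y v : T) (a b : T + T).

Definition old_edge e : {set T + T} := inl @: e.
Definition clone_edge e x : {set T + T} := inl @: (e :\ x) :|: [set inr x].

Lemma inl_old_edge e y : (inl y \in old_edge e) = (y \in e).
Proof. exact/mem_imset/inl_inj. Qed.

Lemma inr_old_edge e y : (inr y \in old_edge e) = false.
Proof. by apply/imsetP => -[]. Qed.

Lemma inl_clone_edge e x y : (inl y \in clone_edge e x) = (y != x) && (y \in e).
Proof. by rewrite !inE (mem_imset _ _ inl_inj) !inE orbF. Qed.

Lemma inr_clone_edge e x y : (inr y \in clone_edge e x) = (y == x).
Proof.
rewrite !inE; case: imsetP => [[? _ //]|_] /=.
by apply/eqP/eqP => [[]|->].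
Qed.

Lemma ilth_stepP E (e' : {set T + T}) :
  reflect (exists2 e, e \in E &
            e' = old_edge e \/ exists2 x, x \in e & e' = clone_edge e x)
          (e' \in ilth_step E).
Proof.
rewrite !inE; apply: (iffP orP).
- case=> [/imsetP[e Ee ->]|/imset2P[e x Ee xe ->]]; exists e => //; first by left.
  by right; exists x.
- case=> e Ee [->|[x xe ->]]; [left; exact: imset_f | right; exact: imset2_f].
Qed.

Lemma old_edge_step E e : e \in E -> old_edge e \in ilth_step E.
Proof. by move=> Ee; apply/ilth_stepP; exists e; last left. Qed.

Lemma clone_edge_step E e x : e \in E -> x \in e -> clone_edge e x \in ilth_step E.
Proof. by move=> Ee xe; apply/ilth_stepP; exists e; last (right; exists x). Qed.

Lemma card_old_edge e : #|old_edge e| = #|e|.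
Proof. exact/card_imset/inl_inj. Qed.

Lemma card_clone_edge e x : x \in e -> #|clone_edge e x| = #|e|.
Proof.
move=> xe; rewrite cardsU (card_imset _ inl_inj) cards1 (cardsD1 x e) xe.
suff -> : inl @: (e :\ x) :&: [set inr x] = set0 by rewrite cards0 subn0 addnC.
by apply/setP => -[] a; rewrite !inE ?inr_old_edge ?andbF.
Qed.

Lemma ilth_step_uniform k E : uniform k E -> uniform k (ilth_step E).
Proof.
move=> Ek e' /ilth_stepP[e Ee [->|[x xe ->]]].
  by rewrite card_old_edge Ek.
by rewrite card_clone_edge ?Ek.
Qed.

Definition vparent (a : T + T) : T := match a with inl y | inr y => y end.
Definition eparent (e' : {set T + T}) : {set T} := vparent @: e'.

Lemma vparent_neq a b : vparent a != vparent b -> a != b.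
Proof. by apply: contra_neq => ->. Qed.

Lemma eparent_old_edge e : eparent (old_edge e) = e.
Proof. by rewrite /eparent -imset_comp imset_id. Qed.

Lemma eparent_clone_edge e x : x \in e -> eparent (clone_edge e x) = e.
Proof.
by move=> xe; rewrite /eparent imsetU -imset_comp imset_id imset_set1 setUC setD1K.
Qed.

Lemma eparent_step E (e' : {set T + T}) : e' \in ilth_step E -> eparent e' \in E.
Proof.
by case/ilth_stepP => e Ee [->|[x xe ->]]; rewrite ?eparent_old_edge ?eparent_clone_edge.
Qed.

Lemma vparent_inj_step_edge E (e' : {set T + T}) :
  e' \in ilth_step E -> {in e' &, injective vparent}.
Proof.
case/ilth_stepP => e _ [->|[x _ ->]] [] y [] z;
  rewrite ?inl_old_edge ?inr_old_edge ?inl_clone_edge ?inr_clone_edge //= => yin zin yz.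
all: subst z => //.
- by move: yin; rewrite (eqP zin) eqxx.
- by move: zin; rewrite (eqP yin) eqxx.
Qed.

Lemma inr_step_edge E (e' : {set T + T}) x y :
  e' \in ilth_step E -> inr x \in e' -> inr y \in e' -> x = y.
Proof.
case/ilth_stepP => e _ [->|[z _ ->]]; rewrite ?inr_old_edge ?inr_clone_edge //.
by move=> /eqP-> /eqP->.
Qed.

Definition parent (q : (T + T) * {set T + T} * (T + T) * {set T + T} * (T + T)) :
    T * {set T} * T * {set T} * T :=
  let: (u, e1, v, e2, w) := q in (vparent u, eparent e1, vparent v, eparent e2, vparent w).

Lemma parent_A_set E q : q \in A_set (ilth_step E) -> parent q \in A_set E.
Proof.
case: q => [[[[u e1] v] e2] w].
case/A_setP=> e3 E3 [/and3P[uv vw uw] /andP[E1 E2] /andP[u1 v1] /andP[v2 w2] /andP[u3 w3]].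
apply/A_setP; exists (eparent e3); first exact: eparent_step.
split; rewrite ?eparent_step ?imset_f //.
by rewrite (inj_in_eq (vparent_inj_step_edge E1)) // (inj_in_eq (vparent_inj_step_edge E2))
           // (inj_in_eq (vparent_inj_step_edge E3)) // uv vw uw.
Qed.

Definition vlift x y : T + T := if x == y then inr y else inl y.

Definition lift_edge v e x : {set T + T} :=
  if x == v then old_edge e else clone_edge e x.

Lemma vparent_vlift x y : vparent (vlift x y) = y.
Proof. by rewrite /vlift; case: eqP. Qed.

Lemma vlift_inl x y : x != y -> vlift x y = inl y.
Proof. by rewrite /vlift => /negPf->. Qed.

Lemma lift_edge_inj v e : injective (lift_edge v e).
Proof.
have inr_lift x : x != v -> inr x \in lift_edge v e x.
  by rewrite /lift_edge => /negPf->; rewrite inr_clone_edge.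
move=> x x'; case: (eqVneq x v) (eqVneq x' v) => [->|xv] [->|x'v] // xx'.
- by move: (inr_lift x' x'v); rewrite -xx' /lift_edge eqxx inr_old_edge.
- by move: (inr_lift x xv); rewrite xx' /lift_edge eqxx inr_old_edge.
- by move: (inr_lift x xv); rewrite xx' /lift_edge (negPf x'v) inr_clone_edge => /eqP.
Qed.

Lemma inl_lift_edge v e x : v \in e -> inl v \in lift_edge v e x.
Proof.
rewrite /lift_edge; case: (eqVneq x v) => [_|xv] ve.
  by rewrite inl_old_edge.
by rewrite inl_clone_edge eq_sym xv.
Qed.

Lemma vlift_lift_edge v e x y : y \in e -> y != v -> vlift x y \in lift_edge v e x.
Proof.
move=> ye yv; rewrite /lift_edge /vlift; case: (eqVneq x v) => [->|xv].
  by rewrite eq_sym (negPf yv) inl_old_edge.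
case: (eqVneq x y) => [->|xy]; first by rewrite inr_clone_edge.
by rewrite inl_clone_edge eq_sym xy.
Qed.

Lemma lift_edge_step E v e x : e \in E -> x \in e -> lift_edge v e x \in ilth_step E.
Proof.
by move=> Ee xe; rewrite /lift_edge; case: eqP; rewrite ?old_edge_step ?clone_edge_step.
Qed.

Lemma eparent_lift_edge v e x : x \in e -> eparent (lift_edge v e x) = e.
Proof.
by move=> xe; rewrite /lift_edge; case: eqP; rewrite ?eparent_old_edge ?eparent_clone_edge.
Qed.

Lemma step_edge_lift E (e' : {set T + T}) v : e' \in ilth_step E -> inl v \in e' ->
  exists2 x, x \in eparent e' & e' = lift_edge v (eparent e') x.
Proof.
case/ilth_stepP => e _ [->|[x xe ->]].
  by rewrite inl_old_edge eparent_old_edge => ve; exists v; rewrite /lift_edge ?eqxx.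
rewrite inl_clone_edge eparent_clone_edge // => /andP[vx _].
by exists x; rewrite /lift_edge // eq_sym (negPf vx).
Qed.

Lemma vlift_vparent v e x a :
  a \in lift_edge v e x -> vparent a != v -> a = vlift x (vparent a).
Proof.
rewrite /lift_edge /vlift; case: (eqVneq x v) => [->|xv]; case: a => y /=;
  rewrite ?inl_old_edge ?inr_old_edge ?inl_clone_edge ?inr_clone_edge //.
- by move=> _ /negPf; rewrite eq_sym => ->.
- by case/andP=> /negPf; rewrite eq_sym => ->.
- by move/eqP->; rewrite eqxx.
Qed.

Lemma step_edge_inr E (e' : {set T + T}) x :
  e' \in ilth_step E -> inr x \in e' -> e' = clone_edge (eparent e') x.
Proof.
case/ilth_stepP => e _ [->|[y ye ->]]; first by rewrite inr_old_edge.
by rewrite inr_clone_edge eparent_clone_edge // => /eqP->.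
Qed.

Lemma inl_step_edge E (e' : {set T + T}) a x :
  e' \in ilth_step E -> a \in e' -> inr x \in e' -> vparent a != x -> a = inl (vparent a).
Proof.
move=> Ee'; case: a => //= y ye' xe'.
by rewrite (inr_step_edge Ee' ye' xe') eqxx.
Qed.

Section Fiber.

Variables (E : {set {set T}}) (u v w : T) (e1 e2 e3 : {set T}).
Hypotheses (uv : u != v) (vw : v != w) (uw : u != w).
Hypotheses (Ee1 : e1 \in E) (Ee2 : e2 \in E) (Ee3 : e3 \in E).
Hypotheses (ue1 : u \in e1) (ve1 : v \in e1) (ve2 : v \in e2) (we2 : w \in e2).
Hypotheses (ue3 : u \in e3) (we3 : w \in e3).

(* The choice (u, w) admits no lift, as [e3] cannot contain both clones; it is
   reassigned to the unique lift through the clone of [v]. *)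
Definition tuple_lift (x : T * T) :=
  let: (x1, x2) := x in
  if x == (u, w) then (inl u, clone_edge e1 v, inr v, clone_edge e2 v, inl w)
  else (vlift x1 u, lift_edge v e1 x1, inl v, lift_edge v e2 x2, vlift x2 w).

Lemma tuple_lift_inj : injective tuple_lift.
Proof.
move=> [x1 x2] [y1 y2] /=.
case: ifP => [/eqP-> | _]; case: ifP => [/eqP-> | _] //.
by case=> _ /lift_edge_inj-> /lift_edge_inj->.
Qed.

Lemma parent_tuple_lift (x : T * T) :
  x \in setX e1 e2 -> parent (tuple_lift x) = (u, e1, v, e2, w).
Proof.
case: x => x1 x2; rewrite in_setX => /andP[x1e1 x2e2] /=.
case: ifP => _ /=; first by rewrite !eparent_clone_edge.
by rewrite !vparent_vlift !eparent_lift_edge.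
Qed.

Lemma tuple_lift_A_set (x : T * T) :
  x \in setX e1 e2 -> tuple_lift x \in A_set (ilth_step E).
Proof.
case: x => x1 x2; rewrite in_setX => /andP[x1e1 x2e2] /=.
case: ifP => [_ | /negbT ne].
  apply/A_setP; exists (old_edge e3); first exact: old_edge_step.
  rewrite !clone_edge_step // !inl_clone_edge !inr_clone_edge !inl_old_edge.
  by rewrite ue1 we2 ue3 we3 !eqxx uv (eq_sym w) vw; split=> //; exact: vparent_neq uw.
have [e3' E3' uw3] : exists2 e3', e3' \in ilth_step E &
                       (vlift x1 u \in e3') && (vlift x2 w \in e3').
  case: (eqVneq x1 u) => [x1u | x1u]; last case: (eqVneq x2 w) => [x2w | x2w].
  - have x2w : x2 != w by apply: contraNneq ne => ->; rewrite x1u.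
    exists (clone_edge e3 u); first exact: clone_edge_step.
    rewrite x1u (vlift_inl x2w) /vlift eqxx inr_clone_edge inl_clone_edge.
    by rewrite eqxx (eq_sym w) uw we3.
  - exists (clone_edge e3 w); first exact: clone_edge_step.
    rewrite x2w (vlift_inl x1u) /vlift eqxx inr_clone_edge inl_clone_edge.
    by rewrite eqxx uw ue3.
  - exists (old_edge e3); first exact: old_edge_step.
    by rewrite (vlift_inl x1u) (vlift_inl x2w) !inl_old_edge ue3 we3.
have wv : w != v by rewrite eq_sym.
apply/A_setP; exists e3' => //.
split; rewrite ?lift_edge_step ?inl_lift_edge ?vlift_lift_edge //.
by apply/and3P; split; apply: vparent_neq; rewrite /= ?vparent_vlift.
Qed.

Lemma tuple_lift_onto q : q \in A_set (ilth_step E) -> parent q = (u, e1, v, e2, w) ->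
  exists2 x, x \in setX e1 e2 & q = tuple_lift x.
Proof.
case: q => [[[[u' e1'] v'] e2'] w'].
case/A_setP=> e3' E3' [_ /andP[E1 E2] /andP[u1 v1] /andP[v2 w2] /andP[u3 w3]].
case=> pu pe1 + pe2 pw; case: v' v1 v2 => y v1 v2 /= yv; subst y.
- have [x1 x1e1 e1'E] := step_edge_lift E1 v1.
  have [x2 x2e2 e2'E] := step_edge_lift E2 v2.
  rewrite pe1 in x1e1 e1'E; rewrite pe2 in x2e2 e2'E.
  have u'E : u' = vlift x1 u.
    by rewrite -pu; apply: (@vlift_vparent v e1); rewrite -?e1'E ?pu.
  have w'E : w' = vlift x2 w.
    by rewrite -pw; apply: (@vlift_vparent v e2); rewrite -?e2'E ?pw // eq_sym.
  exists (x1, x2); first by rewrite in_setX x1e1 x2e2.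
  rewrite /= -u'E -w'E -e1'E -e2'E; case: ifP => // /eqP[x1u x2w].
  move: u3 w3; rewrite u'E w'E x1u x2w /vlift !eqxx => u3 w3.
  by move: uw; rewrite (inr_step_edge E3' u3 w3) eqxx.
- have u'E : u' = inl u by rewrite (inl_step_edge E1 u1 v1) pu.
  have w'E : w' = inl w by rewrite (inl_step_edge E2 w2 v2) pw // eq_sym.
  exists (u, w); first by rewrite in_setX ue1 we2.
  by rewrite /= eqxx u'E w'E (step_edge_inr E1 v1) (step_edge_inr E2 v2) pe1 pe2.
Qed.

End Fiber.

Lemma card_fiber k E p : uniform k E -> p \in A_set E ->
  #|[set q in A_set (ilth_step E) | parent q == p]| = k ^ 2.
Proof.
case: p => [[[[u e1] v] e2] w] Ek.
case/A_setP=> e3 Ee3 [/and3P[uv vw uw] /andP[Ee1 Ee2] /andP[ue1 ve1] /andP[ve2 we2]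
                      /andP[ue3 we3]].
suff -> : [set q in A_set (ilth_step E) | parent q == (u, e1, v, e2, w)] =
          tuple_lift u v w e1 e2 @: setX e1 e2.
  by rewrite card_imset ?cardsX ?Ek //; exact: tuple_lift_inj.
apply/setP => q; rewrite inE; apply/andP/imsetP => [[qA /eqP] | [x x12 ->]].
  exact: tuple_lift_onto qA.
by rewrite (tuple_lift_A_set uv vw uw Ee1 Ee2 Ee3 ue1 ve1 ve2 we2 ue3 we3 x12)
           (parent_tuple_lift u w ve1 ve2 x12).
Qed.

Lemma card_A_set_step k E :
  uniform k E -> #|A_set (ilth_step E)| = k ^ 2 * #|A_set E|.
Proof.
move=> Ek; apply: card_constant_fibers => [q | p]; first exact: parent_A_set.
exact: card_fiber.
Qed.

End ILTHStep.

Lemma ilth_E_uniform k (T : finType) (E0 : {set {set T}}) t :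
  uniform k E0 -> uniform k (ilth_E E0 t).
Proof. by move=> E0k; elim: t => //= t; exact: ilth_step_uniform. Qed.

Theorem lemma4p7 (k : nat) (T : finType) (E0 : {set {set T}}) :
  2 <= k -> uniform k E0 ->
  forall t : nat, #|A_set (ilth_E E0 t)| = (k ^ 2) ^ t * #|A_set E0|.
Proof.
(* The count holds for every k. *)
move=> _ E0k; elim=> [|t IHt]; first by rewrite mul1n.
by rewrite /= (card_A_set_step (ilth_E_uniform (t := t) E0k)) IHt mulnA -expnS.
Qed.
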